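(* Let $p$ be the characteristic of $\mathbb{F}_q$, $t\ge1$, $m=p^t$, and let $v_1,v_2\in\mathcal{R}=\mathbb{F}_q[x]/(x^{p^t}-1)$ with $\gcd(v_1v_2-1,x^{p^t}-1)=1$. Let $r_1,r_2$ be integers with $0<r_1<r_2<\frac{p^t-1}{2}$, and let $\mathcal{C}$ be the QC code of length $2p^t$ generated by $((x-1)^{r_1},v_1(x-1)^{r_1})$ and $(v_2(x-1)^{r_2},(x-1)^{r_2})$. Then $\mathcal{C}^{\perp_E}$ is the QC code generated by $((x-1)^{p^t-r_1},-\overline{v_2}(x-1)^{p^t-r_1})$ and $(-\overline{v_1}(x-1)^{p^t-r_2},(x-1)^{p^t-r_2})$, and $\mathcal{C}^{\perp_E}\subseteq\mathcal{C}$.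
   Context: Elements of $\mathcal{R}$ are identified with representatives of degree $<m$; $[k]=(k_0,\dots,k_{m-1})$; $\overline{k}(x)=k(x^{-1})\bmod(x^m-1)$. The QC code generated by $(u_{i1},u_{i2})$, $i=1,2$, is $\{([r_1u_{11}+r_2u_{21}],[r_1u_{12}+r_2u_{22}]):r_i\in\mathcal{R}\}\subseteq\mathbb{F}_q^{2m}$. $\mathcal{C}^{\perp_E}$ is the dual with respect to $\langle u,v\rangle_E=\sum u_iv_i$. *)

From HB Require Import structures.
From mathcomp Require Import all_boot all_order all_algebra all_field.
Set Implicit Arguments. Unset Strict Implicit. Unset Printing Implicit Defensive.
Import GRing.Theory.
Local Open Scope ring_scope.

Section QC.
Variable F : fieldType.
Variable m : nat.

Definition modR : {poly F} := 'X^m - 1.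

(* [k] = (k_0, ..., k_{m-1}), coefficients of the representative of degree < m *)
Definition vecR (k : {poly F}) : 'rV[F]_m :=
  \row_(i < m) (k %% modR)`_i.

(* \overline{k}(x) = k(x^{-1}) mod (x^m - 1); in R, x^{-1} = x^{m-1} *)
Definition conjR (k : {poly F}) : {poly F} :=
  (k \Po 'X^(m.-1)) %% modR.

Definition qc_code (u11 u12 u21 u22 : {poly F}) (w : 'rV[F]_(m + m)) : Prop :=
  exists r1 r2 : {poly F},
    w = row_mx (vecR (r1 * u11 + r2 * u21)) (vecR (r1 * u12 + r2 * u22)).

Definition eucl_ip (u v : 'rV[F]_(m + m)) : F := \sum_(i < m + m) u 0 i * v 0 i.

Definition eucl_dual (C : 'rV[F]_(m + m) -> Prop) (w : 'rV[F]_(m + m)) : Prop :=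
  forall c, C c -> eucl_ip w c = 0.

End QC.

From HB Require Import structures.
From mathcomp Require Import all_boot all_order all_algebra all_field.
From mathcomp Require Import ring zify.
Set Implicit Arguments. Unset Strict Implicit. Unset Printing Implicit Defensive.
Import GRing.Theory.
Local Open Scope ring_scope.

(* Since m = p^t, (x - 1)^m = x^m - 1, so u = x - 1 is
   nilpotent of index m and the annihilator of u^r is u^(m-r) R.  The Euclidean
   product of ([a1],[a2]) and ([b1],[b2]) is the constant coefficient of
   a1 conj(b1) + a2 conj(b2), a nondegenerate trace form, so w is orthogonal to C
   iff its two pairings with the generators of C vanish in R.  As conj(u) is a unit
   multiple of u, these read (a1 + conj(v1) a2) u^r1 = 0 and (conj(v2) a1 + a2) u^r2 = 0,
   i.e. a1 + conj(v1) a2 is in u^(m-r1) R and conj(v2) a1 + a2 in u^(m-r2) R, which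
   characterises D because 1 - conj(v1) conj(v2) is a unit.  Finally, when
   2 r2 <= m each generator of D is divisible enough by u to lie in C. *)

Section QCSpan.
Variable R : comPzRingType.

Definition qc_span (g11 g12 g21 g22 a b : R) : Prop :=
  exists r s : R, a = r * g11 + s * g21 /\ b = r * g12 + s * g22.

Lemma qc_span_trans (g11 g12 g21 g22 h11 h12 h21 h22 a b : R) :
  qc_span h11 h12 h21 h22 g11 g12 -> qc_span h11 h12 h21 h22 g21 g22 ->
  qc_span g11 g12 g21 g22 a b -> qc_span h11 h12 h21 h22 a b.
Proof.
move=> [r1 [s1 [-> ->]]] [r2 [s2 [-> ->]]] [r [s [-> ->]]].
by exists (r * r1 + s * r2), (r * s1 + s * s2); split; ring.
Qed.

End QCSpan.

Section QCSpanUnit.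
Variable R : comUnitRingType.

Lemma qc_span_dualE (x1 x2 w1 w2 a b : R) : (1 - w1 * w2) \is a GRing.unit ->
  qc_span x1 (- w2 * x1) (- w1 * x2) x2 a b <->
  (exists e1, a + w1 * b = e1 * x1) /\ (exists e2, w2 * a + b = e2 * x2).
Proof.
move=> unit_w; set s := (1 - w1 * w2)^-1; have sK : s * (1 - w1 * w2) = 1 by exact: mulVr.
split=> [[c1 [c2 [-> ->]]] | [[e1 he1] [e2 he2]]].
  by split; [exists (c1 * (1 - w1 * w2)) | exists (c2 * (1 - w1 * w2))]; ring.
exists (s * e1), (s * e2); split.
  transitivity (s * (e1 * x1) - s * w1 * (e2 * x2)); last by ring.
  by rewrite -he1 -he2 -[LHS]mul1r -sK; ring.
transitivity (- s * w2 * (e1 * x1) + s * (e2 * x2)); last by ring.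
by rewrite -he1 -he2 -[LHS]mul1r -sK; ring.
Qed.

Lemma qc_span_of_dvd (u v1 v2 a b al be : R) (r1 r2 n1 n2 : nat) :
  (v1 * v2 - 1) \is a GRing.unit -> (r1 <= r2)%N -> (r1 <= n1)%N -> (r2 <= n2)%N ->
  a = al * u ^+ n1 -> v1 * a - b = be * u ^+ n2 ->
  qc_span (u ^+ r1) (v1 * u ^+ r1) (v2 * u ^+ r2) (u ^+ r2) a b.
Proof.
move=> unit_v /subnK r2E /subnK <- /subnK <- -> /(canRL (subKr _)) ->.
move: (n1 - r1)%N (n2 - r2)%N => d1 d2; rewrite -{}r2E; move: (r2 - r1)%N => d.
set y := (v1 * v2 - 1)^-1; have yK : y * (v1 * v2 - 1) = 1 by exact: mulVr.
exists (al * u ^+ d1 - y * be * u ^+ d2 * v2 * u ^+ d), (y * be * u ^+ d2).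
by rewrite !exprD; split; last rewrite -[be in LHS]mul1r -yK; ring.
Qed.

End QCSpanUnit.

Lemma XsubC1_expn_pchar (R : comNzRingType) (p t : nat) :
  prime p -> p \in [pchar R] ->
  ('X - 1 : {poly R}) ^+ (p ^ t)%N = 'X^(p ^ t)%N - 1.
Proof.
move=> p_prime p_char.
have pt_char : [pchar {poly R}].-nat (p ^ t)%N by rewrite pnatX pnatE // pchar_poly p_char.
rewrite exprDn_pchar //; congr (_ + _); apply/eqP; rewrite -addr_eq0 eq_sym.
rewrite -[X in _ + X](expr1n _ (p ^ t)%N) -exprDn_pchar // addNr expr0n.
by rewrite expn_eq0 eqn0Ngt prime_gt0.
Qed.

Section QuotientRing.
Variable F : fieldType.
Variable m : nat.
Hypothesis m_gt1 : (1 < m)%N.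

Local Notation M := (modR F m).
Local Notation R := {poly %/ M}.
Local Notation psi := (in_qpoly M).

Lemma size_modR : size M = m.+1.
Proof. by rewrite /modR -polyC1 size_XnsubC // ltnW. Qed.

Lemma monic_modR : M \is monic.
Proof. by rewrite /modR -polyC1 monicXnsubC // ltnW. Qed.

Lemma size_modp_modR (a : {poly F}) : (size (a %% M)%R <= m)%N.
Proof. by rewrite -ltnS -size_modR ltn_modp -size_poly_gt0 size_modR. Qed.

Lemma mk_monic_modR : mk_monic M = M.
Proof. by rewrite /mk_monic size_modR monic_modR ltnS ltnW. Qed.

Lemma in_qpolyE (a : {poly F}) : psi a = a %% M :> {poly F}.
Proof. by rewrite /= mk_monic_modR (Pdiv.IdomainMonic.modpE monic_modR). Qed.

Lemma eq_in_qpoly (a b : {poly F}) : psi a = psi b <-> a %% M = b %% M.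
Proof. by rewrite -!in_qpolyE; split=> [-> // | eq_ab]; apply: val_inj. Qed.

Lemma in_qpoly_mod (a : {poly F}) : psi (a %% M) = psi a.
Proof. by apply/eq_in_qpoly; rewrite modp_id. Qed.

Lemma modp_qpoly (x : R) : (x : {poly F}) %% M = x.
Proof.
rewrite modp_small // size_modR ltnS (leq_trans (size_npoly x)) //.
by rewrite mk_monic_modR size_modR.
Qed.

Lemma size_qpoly (x : R) : (size (x : {poly F}) <= m)%N.
Proof. by rewrite -(modp_qpoly x) size_modp_modR. Qed.

Lemma in_qpolyK (x : R) : psi x = x.
Proof. exact/val_inj/(etrans (in_qpolyE x))/modp_qpoly. Qed.

Lemma in_qpoly_modR : psi M = 0.
Proof. exact/val_inj/(etrans (in_qpolyE M))/modpp. Qed.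

Lemma in_qpolyXm : psi 'X ^+ m = 1.
Proof.
rewrite -rmorphXn (_ : 'X ^+ m = M + 1); last by rewrite subrK.
by rewrite rmorphD /= in_qpoly_modR add0r rmorph1.
Qed.

Lemma in_qpolyX_unit : psi 'X \is a GRing.unit.
Proof.
by apply/unitrPr; exists (psi 'X ^+ m.-1); rewrite -exprS prednK ?in_qpolyXm // ltnW.
Qed.

Lemma coprimep_modR_unit (S : comUnitRingType) (f : {rmorphism {poly F} -> S})
    (p : {poly F}) :
  f M = 0 -> coprimep p M -> f p \is a GRing.unit.
Proof.
move=> fM0 /Bezout_eq1_coprimepP [[g h] /= /(congr1 f)].
rewrite rmorphD !rmorphM fM0 mulr0 addr0 rmorph1 => fgp.
by apply/unitrPr; exists (f g); rewrite mulrC.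
Qed.

Lemma vecR_eq (a b : {poly F}) : vecR m a = vecR m b <-> psi a = psi b.
Proof.
rewrite eq_in_qpoly; split=> [eq_ab | eq_ab]; last by apply/rowP=> i; rewrite !mxE eq_ab.
apply/polyP=> i; have [lt_im | le_mi] := ltnP i m.
  by have := congr1 (fun v : 'rV[F]_m => v 0 (Ordinal lt_im)) eq_ab; rewrite !mxE.
by rewrite !nth_default // (leq_trans (size_modp_modR _)).
Qed.

Lemma vecR_rVpoly (v : 'rV[F]_m) : vecR m (rVpoly v) = v.
Proof.
apply/rowP=> i; rewrite mxE modp_small ?coef_rVpoly_ord //.
by rewrite size_modR ltnS size_poly.
Qed.

Lemma row_mx_vecR_surj (w : 'rV[F]_(m + m)) :
  exists a b, w = row_mx (vecR m a) (vecR m b).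
Proof.
by exists (rVpoly (lsubmx w)), (rVpoly (rsubmx w)); rewrite !vecR_rVpoly hsubmxK.
Qed.

Lemma qc_code_vecRE (g11 g12 g21 g22 a b : {poly F}) :
  qc_code g11 g12 g21 g22 (row_mx (vecR m a) (vecR m b)) <->
  qc_span (psi g11) (psi g12) (psi g21) (psi g22) (psi a) (psi b).
Proof.
split=> [[r [s /eq_row_mx [/vecR_eq -> /vecR_eq ->]]] | [r [s [ea eb]]]].
  by exists (psi r), (psi s); rewrite !rmorphD !rmorphM.
exists r, s; congr row_mx; apply/vecR_eq.
  by rewrite ea rmorphD !rmorphM /= !in_qpolyK.
by rewrite eb rmorphD !rmorphM /= !in_qpolyK.
Qed.

Definition conjq : {poly F} -> R := psi \o comp_poly 'X^(m.-1).
HB.instance Definition _ := GRing.LRMorphism.on conjq.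
Arguments conjq _ : simpl never.

Lemma in_qpoly_conjR (a : {poly F}) : psi (conjR m a) = conjq a.
Proof. exact: in_qpoly_mod. Qed.

Lemma in_qpoly_oppconjR_mul (c d : {poly F}) :
  psi (- conjR m c * d) = - conjq c * psi d.
Proof. by rewrite rmorphM rmorphN -in_qpoly_conjR. Qed.

Lemma conjqX : conjq 'X = psi 'X ^+ m.-1.
Proof. by rewrite /conjq /= comp_polyX rmorphXn. Qed.

Lemma conjq_modR : conjq M = 0.
Proof.
rewrite /modR rmorphB rmorphXn rmorph1 /= conjqX -exprM mulnC exprM in_qpolyXm.
by rewrite expr1n subrr.
Qed.

Lemma conjq_mod (a : {poly F}) : conjq (a %% M) = conjq a.
Proof. by rewrite [in RHS](divp_eq a M) rmorphD rmorphM /= conjq_modR mulr0 add0r. Qed.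

Lemma conjq_XsubC : conjq ('X - 1) = - psi 'X ^+ m.-1 * psi ('X - 1).
Proof.
rewrite !rmorphB !rmorph1 /= conjqX mulrBr mulr1 mulNr -exprSr.
by rewrite prednK ?in_qpolyXm ?opprK 1?addrC // ltnW.
Qed.

Lemma coef_modR_mulX (q : {poly F}) i : (size q <= m)%N -> (i < m)%N ->
  ((q * 'X) %% M)`_(i.+1 %% m) = q`_i.
Proof.
move=> size_q lt_im.
(* q x = q_(m-1) (x^m - 1) + r, where r is the cyclic shift of q *)
set r := \poly_(k < m) (if k == 0%N then q`_m.-1 else q`_k.-1).
have qXE : q * 'X = (q`_m.-1)%:P * M + r.
  apply/polyP=> k; rewrite coefMX coefD coefCM coef_poly /modR coefB coefXn coefC.
  have [-> | k_gt0] := eqVneq k 0%N.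
    by rewrite /= eq_sym (gtn_eqF (ltnW m_gt1)) (ltnW m_gt1) sub0r mulrN1 addNr.
  rewrite /=; case: ltnP => [lt_km | le_mk].
    by rewrite (ltn_eqF lt_km) subr0 mulr0 add0r.
  rewrite subr0 addr0; have [-> | ne_km] := eqVneq k m; first by rewrite mulr1.
  rewrite mulr0; apply: nth_default; apply: leq_trans size_q _.
  by move: le_mk ne_km; case: k k_gt0 => // k _ /=; lia.
rewrite qXE modp_addl_mul_small; last by rewrite size_modR ltnS size_poly.
rewrite coef_poly ltn_mod (ltnW m_gt1) /=.
have [lt_i1m | ] := ltnP i.+1 m; first by rewrite modn_small.
move=> le_mi1; have i1E : i.+1 = m by apply/eqP; rewrite eqn_leq lt_im le_mi1.
by rewrite i1E modnn -i1E.
Qed.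

Lemma coef_modR_mulXn (a : {poly F}) s i : (i < m)%N ->
  ((a * 'X^s) %% M)`_((i + s) %% m) = (a %% M)`_i.
Proof.
move=> lt_im; elim: s => [|s IHs]; first by rewrite expr0 mulr1 addn0 modn_small.
rewrite (_ : i + s.+1 = ((i + s) %% m).+1 %[mod m])%N; last first.
  by rewrite addnS -[in RHS]addn1 modnDml addn1.
rewrite exprSr mulrA [_ * 'X]mulrC -modp_mul mulrC.
by rewrite coef_modR_mulX ?size_modp_modR // ltn_mod ltnW.
Qed.

Lemma coef0_mul_conjq (a b : {poly F}) :
  (psi a * conjq b : {poly F})`_0 = \sum_(i < m) (a %% M)`_i * (b %% M)`_i.
Proof.
set B := b %% M.
have BE : B = \sum_(j < m) B`_j *: 'X^j.
  rewrite -poly_def; apply/polyP=> k; rewrite coef_poly; case: ltnP => // le_mk.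
  by rewrite nth_default // (leq_trans (size_modp_modR b)).
have -> : psi a * conjq b = psi (\sum_(j < m) B`_j *: (a * 'X^(m.-1 * j))).
  rewrite -conjq_mod -/B {1}BE !linear_sum mulr_sumr /=; apply: eq_bigr => j _.
  by rewrite !linearZ rmorphM /= -scalerAr rmorphXn /= conjqX -exprM rmorphXn.
rewrite in_qpolyE (big_morph (fun x => x %% M) (modpD M) (mod0p M)) coef_sum.
apply: eq_bigr => j _; rewrite modpZl coefZ mulrC; congr (_ * _).
have -> : (0 = (j + m.-1 * j) %% m)%N by rewrite -mulSn prednK ?modnMr // ltnW.
exact: coef_modR_mulXn.
Qed.

Lemma eucl_ip_vecR (a1 a2 b1 b2 : {poly F}) :
  eucl_ip (row_mx (vecR m a1) (vecR m a2)) (row_mx (vecR m b1) (vecR m b2)) =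
  (psi a1 * conjq b1 + psi a2 * conjq b2 : {poly F})`_0.
Proof.
rewrite /eucl_ip big_split_ord poly_of_qpolyD coefD !coef0_mul_conjq.
by congr (_ + _); apply: eq_bigr => i _; rewrite ?row_mxEl ?row_mxEr !mxE.
Qed.

Lemma qpoly_eq0_coef0_mul_conjq (x : R) :
  (forall k, (k < m)%N -> (x * conjq 'X^k : {poly F})`_0 = 0) -> x = 0.
Proof.
move=> x_orth; apply: val_inj; apply/polyP=> k; rewrite coef0.
have [lt_km | le_mk] := ltnP k m; last first.
  by rewrite nth_default // (leq_trans (size_qpoly x)).
apply: etrans (x_orth k lt_km); rewrite -[in RHS](in_qpolyK x) coef0_mul_conjq.
rewrite modp_qpoly modp_small ?size_polyXn ?size_modR // (bigD1 (Ordinal lt_km)) //=.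
rewrite coefXn eqxx mulr1 big1 ?addr0 // => i ne_ik.
by rewrite coefXn (_ : (i == k :> nat) = false) ?mulr0 //; exact: negbTE ne_ik.
Qed.

Lemma eucl_dual_qc_codeE (g11 g12 g21 g22 a b : {poly F}) :
  eucl_dual (qc_code g11 g12 g21 g22) (row_mx (vecR m a) (vecR m b)) <->
  psi a * conjq g11 + psi b * conjq g12 = 0 /\ psi a * conjq g21 + psi b * conjq g22 = 0.
Proof.
split=> [dual | [orth1 orth2] _ [r [s ->]]]; last first.
  rewrite eucl_ip_vecR (_ : _ + _ = conjq r * 0 + conjq s * 0).
    by rewrite !mulr0 addr0 coef0.
  by rewrite -{1}orth1 -orth2; ring.
split; apply: qpoly_eq0_coef0_mul_conjq => k _.
  apply: etrans (dual _ (ex_intro _ 'X^k (ex_intro _ 0 erefl))); rewrite eucl_ip_vecR.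
  by apply: (congr1 (fun x : R => (x : {poly F})`_0)); ring.
apply: etrans (dual _ (ex_intro _ 0 (ex_intro _ 'X^k erefl))); rewrite eucl_ip_vecR.
by apply: (congr1 (fun x : R => (x : {poly F})`_0)); ring.
Qed.

Lemma mul_conjq_XsubCn_eq0 (x : R) r :
  x * conjq ('X - 1) ^+ r = 0 <-> x * psi ('X - 1) ^+ r = 0.
Proof.
set c := (- psi 'X ^+ m.-1) ^+ r.
have unit_c : c \is a GRing.unit by rewrite unitrX // unitrN unitrX // in_qpolyX_unit.
rewrite conjq_XsubC exprMn -/c mulrA mulrAC.
by split=> [xUc0 | ->]; [apply: (mulIr unit_c); rewrite mul0r | rewrite mul0r].
Qed.

Section NilpotentXsubC.
Hypothesis XsubC_expn : ('X - 1 : {poly F}) ^+ m = M.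

Local Notation U := (psi ('X - 1)).

Lemma mul_XsubCn_eq0 (x : R) r :
  (r <= m)%N -> x * U ^+ r = 0 <-> exists e, x = e * U ^+ (m - r).
Proof.
move=> le_rm; split=> [xU0 | [e ->]]; last first.
  by rewrite -mulrA -exprD subnK // -rmorphXn /= XsubC_expn in_qpoly_modR mulr0.
have XsubC_neq0 : ('X - 1 : {poly F}) != 0 by rewrite -polyC1 monic_neq0 ?monicXsubC.
have /eq_in_qpoly : psi ((x : {poly F}) * ('X - 1) ^+ r) = psi 0.
  by rewrite rmorph0 -xU0 rmorphM rmorphXn -[in RHS](in_qpolyK x).
rewrite mod0p => /modp_eq0P dvd_M.
have : ('X - 1) ^+ (m - r) * ('X - 1) ^+ r %| (x : {poly F}) * ('X - 1) ^+ r.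
  by rewrite -exprD subnK // XsubC_expn.
rewrite dvdp_mul2r ?expf_neq0 // => dvd_x.
exists (psi (x %/ ('X - 1) ^+ (m - r))); rewrite -rmorphXn -rmorphM divpK //.
exact/esym/in_qpolyK.
Qed.

Section Codes.
Variables (v1 v2 : {poly F}) (r1 r2 : nat).
Hypothesis coprime_v : coprimep (v1 * v2 - 1) M.
Hypothesis le_r12 : (r1 <= r2)%N.
Hypothesis r2_le : (2 * r2 <= m)%N.

Local Notation u := ('X - 1).
Local Notation C := (qc_code (m := m) (u ^+ r1) (v1 * u ^+ r1) (v2 * u ^+ r2) (u ^+ r2)).
Local Notation D := (qc_code (m := m) (u ^+ (m - r1)) (- conjR m v2 * u ^+ (m - r1))
                                      (- conjR m v1 * u ^+ (m - r2)) (u ^+ (m - r2))).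

Lemma eucl_dual_qc_code_XsubCE (w : 'rV[F]_(m + m)) : eucl_dual C w <-> D w.
Proof.
have [a [b ->]] := row_mx_vecR_surj w.
have unit_conj : (1 - conjq v1 * conjq v2) \is a GRing.unit.
  have := coprimep_modR_unit conjq_modR coprime_v.
  by rewrite rmorphB rmorph1 rmorphM -unitrN opprB.
rewrite eucl_dual_qc_codeE qc_code_vecRE !in_qpoly_oppconjR_mul qc_span_dualE //.
have -> : psi a * conjq (u ^+ r1) + psi b * conjq (v1 * u ^+ r1) =
          (psi a + conjq v1 * psi b) * conjq u ^+ r1 by rewrite rmorphM !rmorphXn; ring.
have -> : psi a * conjq (v2 * u ^+ r2) + psi b * conjq (u ^+ r2) =
          (conjq v2 * psi a + psi b) * conjq u ^+ r2 by rewrite rmorphM !rmorphXn; ring.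
by rewrite !mul_conjq_XsubCn_eq0 !mul_XsubCn_eq0 ?rmorphXn //; lia.
Qed.

Lemma qc_code_XsubC_dual_sub (w : 'rV[F]_(m + m)) : D w -> C w.
Proof.
have [a [b ->]] := row_mx_vecR_surj w.
have unit_v : (psi v1 * psi v2 - 1) \is a GRing.unit.
  have := coprimep_modR_unit in_qpoly_modR coprime_v.
  by rewrite rmorphB rmorph1 rmorphM.
rewrite !qc_code_vecRE !in_qpoly_oppconjR_mul !rmorphM !rmorphXn.
apply: qc_span_trans.
  by apply: (qc_span_of_dvd (al := 1) (be := psi v1 + conjq v2)
               (n1 := m - r1) (n2 := m - r1)); rewrite ?mul1r //; [lia | lia | ring].
by apply: (qc_span_of_dvd (al := - conjq v1) (be := - (psi v1 * conjq v1 + 1))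
             (n1 := m - r2) (n2 := m - r2)); rewrite //; [lia | lia | ring].
Qed.

End Codes.
End NilpotentXsubC.
End QuotientRing.

Theorem mainTheorem14 (F : finFieldType) (p t : nat) (v1 v2 : {poly F})
    (r1 r2 : nat) :
  prime p -> p \in [pchar F] -> (1 <= t)%N ->
  coprimep (v1 * v2 - 1) ('X^(p ^ t) - 1) ->
  (0 < r1)%N -> (r1 < r2)%N -> (2 * r2 < p ^ t - 1)%N ->
  let m := (p ^ t)%N in
  let C := qc_code (m := m) (('X - 1) ^+ r1) (v1 * ('X - 1) ^+ r1)
                            (v2 * ('X - 1) ^+ r2) (('X - 1) ^+ r2) in
  let D := qc_code (m := m) (('X - 1) ^+ (m - r1))
                            (- conjR m v2 * ('X - 1) ^+ (m - r1))
                            (- conjR m v1 * ('X - 1) ^+ (m - r2))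
                            (('X - 1) ^+ (m - r2)) in
  (forall w, eucl_dual C w <-> D w) /\ (forall w, eucl_dual C w -> C w).
Proof.
move=> p_prime p_char t_gt0 coprime_v _ lt_r12 r2_lt m C D.
have m_gt1 : (1 < m)%N by rewrite -{1}(expn0 p) ltn_exp2l // prime_gt1.
have XsubC_expn := XsubC1_expn_pchar t p_prime p_char.
have le_r12 : (r1 <= r2)%N := ltnW lt_r12.
have r2_le : (2 * r2 <= m)%N by rewrite /m; lia.
have dualE := eucl_dual_qc_code_XsubCE m_gt1 XsubC_expn coprime_v le_r12 r2_le.
by split=> // w /dualE; apply: qc_code_XsubC_dual_sub.
Qed.
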